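(* Let $\Phi,\Psi$ be Young functions satisfying $\Delta_2$ such that $\Phi\in\Delta'$ and $\tilde\Psi\in\Delta'$. Then there exists $C=C(\Phi,\Psi)>0$ such that \[ \Psi\circ\Phi^{-1}(s)\,\Psi\circ\Phi^{-1}(t)\le C\,\Psi\circ\Phi^{-1}(st)\qquad\forall\,s,t\ge0. \]
   Context: A Young function is $\Phi(t)=\int_0^t\varphi(s)\,ds$ with $\varphi$ increasing, right continuous, $\varphi(t)=0$ iff $t=0$; $\tilde\Psi(t)=\sup_{s>0}\{st-\Psi(s)\}$ is the complementary function. $\Delta_2$: $\Phi(2t)\le C\Phi(t)$ for all $t\ge0$; $\Delta'$: $\Phi(st)\le C\Phi(s)\Phi(t)$ for all $s,t\ge0$ (some $C>1$). *)

From HB Require Import structures.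
From mathcomp Require Import all_boot all_order all_algebra.
From mathcomp Require Import all_classical all_reals all_analysis.
Set Implicit Arguments. Unset Strict Implicit. Unset Printing Implicit Defensive.
Import Order.TTheory GRing.Theory Num.Theory.
Import numFieldNormedType.Exports.
Local Open Scope classical_set_scope.
Local Open Scope ring_scope.

Definition young (R : realType) (Phi : R -> R) : Prop :=
  exists phi : R -> R,
    (forall s t, 0 <= s -> s <= t -> phi s <= phi t) /\
    (forall t, 0 <= t -> phi x @[x --> t^'+] --> phi t) /\
    (forall t, 0 <= t -> (phi t = 0 <-> t = 0)) /\
    (forall t, 0 <= t ->
       (Phi t)%:E = (\int[@lebesgue_measure R]_(x in `[0%R, t]%classic) (phi x)%:E)%E).

Definition compl_young (R : realType) (Psi : R -> R) (t : R) : \bar R :=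
  ereal_sup [set (s * t - Psi s)%:E | s in [set s : R | 0 < s]].

(* Inverse of a Young function on [0,+oo) (Young functions are increasing
   bijections of [0,+oo)); written as  Phi^{-1}(s) = sup {t >= 0 | Phi t <= s}. *)
Definition young_inv (R : realType) (Phi : R -> R) (s : R) : R :=
  sup [set t : R | 0 <= t /\ Phi t <= s].

Definition Delta2 (R : realType) (Phi : R -> R) : Prop :=
  exists C : R, forall t, 0 <= t -> Phi (2 * t) <= C * Phi t.

Definition Delta' (R : realType) (Phi : R -> R) : Prop :=
  exists C : R, 1 < C /\ forall s t, 0 <= s -> 0 <= t -> Phi (s * t) <= C * Phi s * Phi t.

Definition Delta'_ext (R : realType) (Phi : R -> \bar R) : Prop :=
  exists C : R, 1 < C /\ forall s t : R, (0 <= s)%R -> (0 <= t)%R ->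
    (Phi (s * t)%R <= C%:E * Phi s * Phi t)%E.

From HB Require Import structures.
From mathcomp Require Import all_boot all_order all_algebra.
From mathcomp Require Import all_classical all_reals all_analysis measurable_realfun.
From mathcomp Require Import ring lra.
Set Implicit Arguments. Unset Strict Implicit. Unset Printing Implicit Defensive.
Import Order.TTheory GRing.Theory Num.Theory.
Local Open Scope classical_set_scope.
Local Open Scope ring_scope.

(* Let [x = Phi^-1(s)], [y = Phi^-1(t)] and [w = Phi^-1(s t)].  As [Phi] is
   convex with [Phi 0 = 0], [Phi^-1(c s) <= c Phi^-1(s)] for [c >= 1], so [Phi]
   in Delta' with constant [C1] gives [x y <= Phi^-1(C1 s t) <= C1 w].  Young's
   equality [~Psi(psi x) = x psi x - Psi x] turns [~Psi] in Delta' with constant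
   [C2] into [C2 Psi(x) Psi(y) <= Psi(2 C2 x y)], and Delta2 for [Psi] absorbs
   the dilation: [Psi(2 C2 C1 w) <= K Psi(w)]. *)

Section integral_of_nondecreasing.
Context {R : realType} (phi Phi : R -> R).
Hypothesis phi_nd : forall s t, 0 <= s -> s <= t -> phi s <= phi t.
Hypothesis phi_ge0 : forall t, 0 <= t -> 0 <= phi t.
Hypothesis Phi_integral : forall t, 0 <= t ->
  (Phi t)%:E = (\int[lebesgue_measure]_(x in `[0%R, t]%classic) (phi x)%:E)%E.

(* Measurability of monotone functions is only available for functions
   nondecreasing on the whole line, hence this clamped copy of [phi]. *)
Let phi_clamp x := phi (Num.max x 0).

Let measurable_phi_clamp D : measurable D -> measurable_fun D (EFin \o phi_clamp).
Proof.
move=> mD; apply/measurable_EFinP; apply: nondecreasing_measurable => // x y xy.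
by apply: phi_nd; rewrite ?ge_max ?le_max ?xy ?lexx ?orbT.
Qed.

Let phi_clamp_ge0 x : 0 <= phi_clamp x.
Proof. by apply: phi_ge0; rewrite le_max lexx orbT. Qed.

Let Phi_integral_clamp t : 0 <= t ->
  (Phi t)%:E = (\int[lebesgue_measure]_(x in `[0%R, t]%classic) (phi_clamp x)%:E)%E.
Proof.
move=> t0; rewrite Phi_integral //; apply: eq_integral => x.
by rewrite inE /= in_itv /= => /andP[x0 _]; rewrite /phi_clamp max_l.
Qed.

Let Phi_split a b : 0 <= a -> a <= b -> (Phi b)%:E =
  ((Phi a)%:E + \int[lebesgue_measure]_(x in `]a, b]%classic) (phi_clamp x)%:E)%E.
Proof.
move=> a0 ab; rewrite !Phi_integral_clamp ?(le_trans a0) //.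
rewrite (@itv_bndbnd_setU _ _ (BLeft 0) (BRight a) (BRight b)) //.
rewrite ge0_integral_setU //.
- by apply: measurable_phi_clamp; apply: measurableU.
- by move=> x _; rewrite lee_fin phi_clamp_ge0.
apply/disj_setPS => x [] /=; rewrite !in_itv /= => /andP[_ xa] /andP[ax _].
by move: (lt_le_trans ax xa); rewrite ltxx.
Qed.

Let integral_clamp_bounds a b : 0 <= a -> a <= b ->
  ((phi a * (b - a))%:E <= \int[lebesgue_measure]_(x in `]a, b]%classic) (phi_clamp x)%:E
    <= (phi b * (b - a))%:E)%E.
Proof.
move=> a0 ab.
have len_ab : lebesgue_measure (`]a, b] : set R) = (b - a)%:E.
  rewrite lebesgue_measure_itv /=; case: ltP => /=; first by rewrite -EFinD.
  by rewrite lee_fin => ba; rewrite (@le_anti _ _ b a) ?ab ?ba // subrr.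
have xa x : `]a, b]%classic x -> a < x /\ x <= b by rewrite /= in_itv /= => /andP.
rewrite !EFinM -len_ab -!integral_cst //; apply/andP; split.
- apply: ge0_le_integral => //; try exact: measurable_phi_clamp.
    by move=> x _; rewrite lee_fin phi_ge0.
  move=> x /xa[ax _]; rewrite lee_fin.
  by apply: phi_nd => //; rewrite le_max (ltW ax).
- apply: ge0_le_integral => //; try exact: measurable_phi_clamp.
    by move=> x _; rewrite lee_fin phi_clamp_ge0.
  move=> x /xa[ax xb]; have x0 : 0 <= x by rewrite (le_trans a0) // ltW.
  by rewrite lee_fin /phi_clamp max_l // phi_nd.
Qed.

Lemma integral_nondecreasing_increment a b : 0 <= a -> a <= b ->
  (b - a) * phi a <= Phi b - Phi a <= (b - a) * phi b.
Proof.
move=> a0 ab; have := integral_clamp_bounds a0 ab.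
have -> : (\int[lebesgue_measure]_(x in `]a, b]%classic) (phi_clamp x)%:E)%E =
          (Phi b - Phi a)%:E.
  by rewrite EFinB (Phi_split a0 ab) [X in (X - _)%E]addeC addeK.
by rewrite !lee_fin ![(_ - _) * _]mulrC.
Qed.

Lemma integral_nondecreasing0 : Phi 0 = 0.
Proof. by apply/eqP; rewrite -(@eqe R) Phi_integral // set_itv1 integral_set1. Qed.

End integral_of_nondecreasing.

Record young_primitive {R : realType} (Phi phi : R -> R) : Prop := YoungPrimitive {
  deriv_nd : forall s t, 0 <= s -> s <= t -> phi s <= phi t;
  deriv_ge0 : forall t, 0 <= t -> 0 <= phi t;
  deriv_gt0 : forall t, 0 < t -> 0 < phi t;
  primitive0 : Phi 0 = 0;
  primitive_increment : forall a b, 0 <= a -> a <= b ->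
    (b - a) * phi a <= Phi b - Phi a <= (b - a) * phi b }.

Lemma young_primitive_of_young {R : realType} (Phi : R -> R) :
  young Phi -> exists phi, young_primitive Phi phi.
Proof.
move=> [phi [phi_nd [_ [phi_eq0 Phi_int]]]].
have phi00 : phi 0 = 0 by apply/phi_eq0.
have phi_ge0 t : 0 <= t -> 0 <= phi t by move=> t0; rewrite -phi00 phi_nd.
exists phi; split => //.
- move=> t t0; rewrite lt_def phi_ge0 ?ltW // andbT.
  by apply/eqP => /(phi_eq0 _ (ltW t0)) t_eq0; rewrite t_eq0 ltxx in t0.
- exact: integral_nondecreasing0 Phi_int.
- exact: integral_nondecreasing_increment.
Qed.

Section young_primitive_theory.
Context {R : realType} {Phi phi : R -> R} (Y : young_primitive Phi phi).

Lemma young_ge0 t : 0 <= t -> 0 <= Phi t.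
Proof.
move=> t0; have /andP[incr _] := primitive_increment Y (lexx 0) t0.
rewrite (primitive0 Y) !subr0 in incr.
by apply: le_trans incr; rewrite mulr_ge0 // (deriv_ge0 Y).
Qed.

Lemma young_le a b : 0 <= a -> a <= b -> Phi a <= Phi b.
Proof.
move=> a0 ab; have /andP[incr _] := primitive_increment Y a0 ab.
rewrite -subr_ge0; apply: le_trans incr.
by rewrite mulr_ge0 // ?subr_ge0 // (deriv_ge0 Y).
Qed.

Lemma young_le_mul x : 0 <= x -> Phi x <= x * phi x.
Proof.
move=> x0; have /andP[_ ] := primitive_increment Y (lexx 0) x0.
by rewrite (primitive0 Y) !subr0.
Qed.

Lemma young_tangent x s : 0 <= x -> 0 <= s -> Phi x + (s - x) * phi x <= Phi s.
Proof.
move=> x0 s0; case: (leP x s) => xs.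
  by have /andP[+ _] := primitive_increment Y x0 xs; lra.
by have /andP[_ +] := primitive_increment Y s0 (ltW xs); lra.
Qed.

(* With [c = l a]:
   [(1 - l) Phi c <= (1 - l) c phi c = l (a - c) phi c <= l (Phi a - Phi c)]. *)
Lemma young_scale_le l a : 0 <= l <= 1 -> 0 <= a -> Phi (l * a) <= l * Phi a.
Proof.
move=> /andP[l0 l1] a0; set c := l * a.
have c0 : 0 <= c by rewrite mulr_ge0.
have ca : c <= a by rewrite /c -[leRHS]mul1r ler_wpM2r.
have /andP[incr _] := primitive_increment Y c0 ca.
have Phic := young_le_mul c0.
have phic0 := deriv_ge0 Y c0.
have e : (1 - l) * (c * phi c) = l * ((a - c) * phi c) by rewrite /c; ring.
have h1 : (1 - l) * Phi c <= (1 - l) * (c * phi c) by rewrite ler_wpM2l ?subr_ge0.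
have h2 : l * ((a - c) * phi c) <= l * (Phi a - Phi c) by rewrite ler_wpM2l.
lra.
Qed.

Lemma young_ge_affine t : 1 <= t -> (t - 1) * phi 1 <= Phi t.
Proof.
move=> t1; have /andP[+ _] := primitive_increment Y ler01 t1.
by have := young_ge0 ler01; lra.
Qed.

Lemma young_sublevel_has_sup s : 0 <= s -> has_sup [set t | 0 <= t /\ Phi t <= s].
Proof.
move=> s0; split; first by exists 0; split => //; rewrite (primitive0 Y).
have phi1 := deriv_gt0 Y ltr01.
exists (1 + s / phi 1) => t [t0 Pts]; case: (leP t 1) => t1.
  by apply: le_trans t1 _; rewrite lerDl divr_ge0 // ltW.
rewrite addrC -lerBlDr ler_pdivlMr //.
exact: le_trans (young_ge_affine (ltW t1)) Pts.
Qed.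

Lemma young_inv_ub s t : 0 <= s -> 0 <= t -> Phi t <= s -> t <= young_inv Phi s.
Proof. by move=> s0 t0 Pts; apply: sup_upper_bound (young_sublevel_has_sup s0) _ _. Qed.

Lemma young_inv_ge0 s : 0 <= s -> 0 <= young_inv Phi s.
Proof. by move=> s0; apply: young_inv_ub; rewrite ?(primitive0 Y). Qed.

Lemma young_inv_le s x : 0 <= s ->
  (forall t, 0 <= t -> Phi t <= s -> t <= x) -> young_inv Phi s <= x.
Proof.
move=> s0 ub; apply: ge_sup; first by case: (young_sublevel_has_sup s0).
by move=> t [t0 Pts]; apply: ub.
Qed.

Lemma young_inv_mulr_le s x M : 0 <= s -> 0 <= x -> 0 <= M ->
  (forall t, 0 <= t -> Phi t <= s -> t * x <= M) -> young_inv Phi s * x <= M.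
Proof.
move=> s0 x0 M0 ub; have [->|xn0] := eqVneq x 0; first by rewrite mulr0.
have xp : 0 < x by rewrite lt_def xn0.
rewrite -ler_pdivlMr //; apply: young_inv_le => // t t0 Pts.
by rewrite ler_pdivlMr // ub.
Qed.

Lemma young_inv_dilate c s : 1 <= c -> 0 <= s -> young_inv Phi (c * s) <= c * young_inv Phi s.
Proof.
move=> c1 s0; have cp : 0 < c by apply: lt_le_trans c1.
apply: young_inv_le => [|t t0 Pts]; first by rewrite mulr_ge0 // ltW.
rewrite -ler_pdivrMl //; apply: young_inv_ub => //.
  by rewrite mulr_ge0 // invr_ge0 ltW.
apply: le_trans (young_scale_le _ t0) _; first by rewrite invr_ge0 (ltW cp) invf_le1.
by rewrite ler_pdivrMl.
Qed.

Lemma young_inv_mul C s t : 0 <= C ->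
  (forall a b, 0 <= a -> 0 <= b -> Phi (a * b) <= C * Phi a * Phi b) ->
  0 <= s -> 0 <= t ->
  young_inv Phi s * young_inv Phi t <= young_inv Phi (C * s * t).
Proof.
move=> C0 DPhi s0 t0; have Cst : 0 <= C * s * t by rewrite !mulr_ge0.
apply: (young_inv_mulr_le s0 (young_inv_ge0 t0) (young_inv_ge0 Cst)) => a a0 Pas.
rewrite mulrC; apply: (young_inv_mulr_le t0 a0 (young_inv_ge0 Cst)) => b b0 Pbt.
apply: young_inv_ub => //; first exact: mulr_ge0.
rewrite mulrC; apply: le_trans (DPhi _ _ a0 b0) _.
by rewrite -!mulrA ler_wpM2l // ler_pM // young_ge0.
Qed.

Lemma Delta2_dilate c : Delta2 Phi -> 0 <= c ->
  exists K, 0 < K /\ forall x, 0 <= x -> Phi (c * x) <= K * Phi x.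
Proof.
move=> [D D2] c0; set D1 := Num.max D 1.
have D1p : 0 < D1 by rewrite lt_max ltr01 orbT.
have double x : 0 <= x -> Phi (2 * x) <= D1 * Phi x.
  move=> x0; apply: le_trans (D2 x x0) _.
  by rewrite ler_wpM2r ?young_ge0 // le_max lexx.
have pow2 n x : 0 <= x -> Phi (2 ^+ n * x) <= D1 ^+ n * Phi x.
  elim: n x => [|n IH] x x0; first by rewrite !mul1r.
  rewrite !exprS -!mulrA; apply: le_trans (double _ _) _.
    by rewrite mulr_ge0 // exprn_ge0.
  by rewrite ler_wpM2l ?IH // ltW.
exists (D1 ^+ Num.bound c); split => [|x x0]; first exact: exprn_gt0.
apply: le_trans (pow2 _ _ x0); apply: young_le; first exact: mulr_ge0.
apply: ler_wpM2r => //; apply: le_trans (ltW (archi_boundP c0)) _.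
by rewrite -natrX ler_nat ltnW // ltn_expl.
Qed.

End young_primitive_theory.

Section complementary_young.
Context {R : realType} {Psi psi : R -> R} (Y : young_primitive Psi psi).

Lemma compl_young_lb z w : 0 < z -> ((z * w - Psi z)%:E <= compl_young Psi w)%E.
Proof. by move=> z0; apply: ereal_sup_ubound; exists z. Qed.

(* Young's equality: the supremum defining [compl_young Psi (psi x)] is
   attained at [x], by the supporting line of [Psi] at [x]. *)
Lemma compl_young_deriv x : 0 < x -> compl_young Psi (psi x) = (x * psi x - Psi x)%:E.
Proof.
move=> x0; apply/le_anti/andP; split; last exact: compl_young_lb.
apply: ge_ereal_sup => _ [s s0 <-]; rewrite lee_fin.
by have := young_tangent Y (ltW x0) (ltW s0); lra.
Qed.

Lemma young_supermul_of_compl C x y : 0 < C ->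
  (forall s t, 0 <= s -> 0 <= t ->
     (compl_young Psi (s * t) <= C%:E * compl_young Psi s * compl_young Psi t)%E) ->
  0 <= x -> 0 <= y -> C * (Psi x * Psi y) <= Psi (2 * C * x * y).
Proof.
move=> Cp DPsi x0 y0.
have [->|xn0] := eqVneq x 0; first by rewrite !(mulr0, mul0r, primitive0 Y).
have [->|yn0] := eqVneq y 0; first by rewrite !(mulr0, mul0r, primitive0 Y).
have xp : 0 < x by rewrite lt_def xn0.
have yp : 0 < y by rewrite lt_def yn0.
(* [z] makes [z psi x psi y] twice the bound [C x psi x y psi y] of the
   right-hand side of Delta'. *)
set z := 2 * C * x * y; have zp : 0 < z by rewrite !mulr_gt0.
have := DPsi _ _ (deriv_ge0 Y x0) (deriv_ge0 Y y0).
rewrite !compl_young_deriv // -!EFinM => /(le_trans (compl_young_lb _ zp)).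
rewrite lee_fin => compl_le.
have Psix := young_le_mul Y x0; have Psiy := young_le_mul Y y0.
have Psix0 := young_ge0 Y x0; have Psiy0 := young_ge0 Y y0.
have h1 : C * ((x * psi x - Psi x) * (y * psi y - Psi y)) <= C * (x * psi x * (y * psi y)).
  by rewrite ler_pM2l //; apply: ler_pM; lra.
have h2 : C * (Psi x * Psi y) <= C * (x * psi x * (y * psi y)).
  by rewrite ler_pM2l //; apply: ler_pM.
have h3 : z * (psi x * psi y) = 2 * (C * (x * psi x * (y * psi y))) by rewrite /z; ring.
lra.
Qed.

End complementary_young.

Theorem lemma3p6 (R : realType) (Phi Psi : R -> R) :
  young Phi -> young Psi -> Delta2 Phi -> Delta2 Psi ->
  Delta' Phi -> Delta'_ext (compl_young Psi) ->
  exists C : R, 0 < C /\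
    forall s t : R, 0 <= s -> 0 <= t ->
      Psi (young_inv Phi s) * Psi (young_inv Phi t)
        <= C * Psi (young_inv Phi (s * t)).
Proof.
move=> /young_primitive_of_young[phi YPhi] /young_primitive_of_young[psi YPsi] _ D2Psi.
move=> [C1 [C1_gt1 DPhi]] [C2 [C2_gt1 DcPsi]].
have C1p : 0 < C1 by apply: lt_trans C1_gt1.
have C2p : 0 < C2 by apply: lt_trans C2_gt1.
have c0 : 0 <= 2 * C2 * C1 by rewrite !mulr_ge0 // ltW.
have [K [Kp Psi_dilate]] := Delta2_dilate YPsi D2Psi c0.
exists (K / C2); split => [|s t s0 t0]; first by rewrite divr_gt0.
set x := young_inv Phi s; set y := young_inv Phi t; set w := young_inv Phi (s * t).
have x0 : 0 <= x := young_inv_ge0 YPhi s0.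
have y0 : 0 <= y := young_inv_ge0 YPhi t0.
have w0 : 0 <= w := young_inv_ge0 YPhi (mulr_ge0 s0 t0).
have xy_le : x * y <= C1 * w.
  apply: le_trans (young_inv_mul YPhi (ltW C1p) DPhi s0 t0) _.
  by rewrite -mulrA (young_inv_dilate YPhi) ?(ltW C1_gt1) ?mulr_ge0.
rewrite mulrAC ler_pdivlMr // mulrC.
apply: le_trans (young_supermul_of_compl YPsi C2p DcPsi x0 y0) _.
apply: le_trans _ (Psi_dilate _ w0); apply: (young_le YPsi).
  by rewrite !mulr_ge0 // ltW.
by rewrite -!mulrA !ler_wpM2l // ltW.
Qed.
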